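(* Let $A$ be a nontrivial commutative group and $R$ a nonzero commutative ring. (a) If $A$ has an element of infinite order, then the augmentation ideal of $R[A]$ is not nilpotent. (b) The augmentation ideal of $\mathbb{Z}[A]$ is not nilpotent. (c) Let $m,N\ge2$. If there is a prime $p$ with $p\mid N$ and $p\nmid m$, and $A$ has an element of order $m$, then $\nu((\mathbb{Z}/N\mathbb{Z})[A])=\infty$. (d) If $A$ is finite, then $\nu(R[A])\ge\max(\exp(A),\operatorname{rank}(A))$.
   Context: For a commutative ring $R$ and commutative group $A$, the augmentation ideal $I$ of the group ring $R[A]$ is the kernel of $\sum r_a[a]\mapsto\sum r_a$; $\nu(R[A])$ is the least $n\in\mathbb N$ with $I^n=0$, or $\infty$ if none exists. For a finite commutative group $A$, $\exp(A)$ is its exponent and $\operatorname{rank}(A)$ is the least $n$ such that $A$ is a direct sum of $n$ cyclic groups. *)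

From HB Require Import structures.
From mathcomp Require Import all_boot all_order all_algebra all_fingroup all_solvable.
From mathcomp Require Import freeg.

Set Implicit Arguments.
Unset Strict Implicit.
Unset Printing Implicit Defensive.

Import GRing.Theory.
Local Open Scope ring_scope.

(* The group ring R[A] of a (possibly infinite) commutative group A   *)
(* (a zmodType, written additively) over a commutative ring R.         *)
(* Its elements are the finite formal sums \sum_a r_a [a], realised as *)
(* multinomials' free module {freeg A / R} (canonical representation,  *)
(* so Leibniz equality is equality in R[A]).  Multiplication is the    *)
Section GroupRing.
Variables (R : comNzRingType) (A : zmodType).

Definition gring := {freeg A / R}.

Definition gr_mono (r : R) (a : A) : gring := << r *g a >>.

Definition gr_one : gring := gr_mono 1 0.

Definition gr_mul (f g : gring) : gring :=
  \sum_(x <- dom f) \sum_(y <- dom g) gr_mono (coeff x f * coeff y g) (x + y).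

Definition augmentation (f : gring) : R := \sum_(x <- dom f) coeff x f.

Definition gr_prod (s : seq gring) : gring := foldr gr_mul gr_one s.

(* I^n = 0, where I is the augmentation ideal: since I^n is additively *)
(* spanned by the products of n elements of I, this says every product *)
(* of n elements of augmentation 0 vanishes.                          *)
Definition aug_pow_zero (n : nat) : Prop :=
  forall s : n.-tuple gring,
    all (fun f => augmentation f == 0) s -> gr_prod s = 0.

(* nu(R[A]) = infinity : no power of I vanishes *)
Definition aug_not_nilpotent : Prop := forall n, ~ aug_pow_zero n.

(* nu(R[A]) >= k  (with nu = infinity if I is not nilpotent) *)
Definition nu_ge (k : nat) : Prop := forall n, aug_pow_zero n -> (k <= n)%N.

End GroupRing.

Definition infinite_order (A : zmodType) (a : A) : Prop :=
  forall k : nat, (0 < k)%N -> a *+ k != 0.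

Definition has_order (A : zmodType) (a : A) (m : nat) : Prop :=
  [/\ (0 < m)%N, a *+ m = 0 & forall k : nat, (0 < k < m)%N -> a *+ k != 0].

(* rank of a finite abelian group: least n such that A is a direct sum *)
(* of n cyclic groups (internal direct product of n cyclic subgroups). *)
Definition cyc_decomp (gT : finGroupType) (G : {set gT}) (k : nat) : bool :=
  [exists t : k.-tuple gT, (\big[dprod/1]_(x <- t) <[x]>)%g == G].

Lemma cyc_decomp_ex (A : finZmodType) : exists k, cyc_decomp [set: A] k.
Proof.
have cA : abelian [set: A].
  by apply/centsP=> x _ y _; apply: addrC.
have [b defG _] := abelian_structure cA.
exists (size b); apply/existsP; exists (in_tuple b); exact/eqP.
Qed.

Definition ab_rank (A : finZmodType) : nat := ex_minn (cyc_decomp_ex A).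

Definition ab_exponent (A : finZmodType) : nat := exponent [set: A].

(* Every [1 - [b]] lies in the augmentation ideal, and products of such elements
   can be followed through a single coefficient. If [a, 2a, ..., na] are all
   nonzero, [(1 - [a])^n] has coefficient [(-1)^n] at [na]; this gives (a) and
   the exponent bound. If each [b_i] lies outside the subgroup generated by
   [b_(i+1), ..., b_n], then [prod_i (1 - [b_i])] has coefficient [(-1)^n] at
   [sum_i b_i]; such sequences exist for every [n] below the rank, which gives
   the rank bound. Finally, for [a] of order [m], [e = sum_(j<m) (1 - [ja])]
   satisfies [e^2 = m e], hence [e^(n+1) = m^n e], whose coefficient at [a] is
   [-m^n]; this is nonzero over [Z], and over [Z/NZ] when a prime divides [N]
   but not [m]. *)

From HB Require Import structures.
From mathcomp Require Import all_boot all_order all_algebra all_fingroup all_solvable.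
From mathcomp Require Import freeg.

Set Implicit Arguments.
Unset Strict Implicit.
Unset Printing Implicit Defensive.

Import GRing.Theory Num.Theory.
Local Open Scope ring_scope.

Section GroupRing.
Variables (R : comNzRingType) (A : zmodType).
Local Notation G := {freeg A / R}.
Implicit Types (f g : G) (a b x y : A) (c : R).

Section Lift.
Variables (M : lmodType R) (F : A -> M).

HB.instance Definition _ := GRing.isZmodMorphism.Build G M (fglift F) (lift_is_additive F).

Lemma fgliftE f : fglift F f = \sum_(y <- dom f) coeff y f *: F y.
Proof. by rewrite -{1}[f]freeg_sumE raddf_sum; apply: eq_bigr => y _; exact: liftU. Qed.

End Lift.

Lemma scaler_freegU c c' y : c *: << c' *g y >> = << c * c' *g y >> :> G.
Proof. by apply/eqP/freeg_eqP => x; rewrite coeffZ !coeffU mulrA. Qed.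

Definition translate b g : G := fglift (fun y => << b + y >>) g.

HB.instance Definition _ b :=
  GRing.isZmodMorphism.Build G G (translate b) (lift_is_additive _).

Lemma coeff_translate x b g : coeff x (translate b g) = coeff (x - b) g.
Proof.
rewrite /translate fgliftE raddf_sum [RHS]/coeff fgliftE.
apply: eq_bigr => y _; rewrite /= coeffZ coeffU mul1r.
by rewrite [_ *: _]/(_ * _) [in RHS]eq_sym subr_eq [y + b]addrC eq_sym.
Qed.

Lemma translateU b c y : translate b << c *g y >> = << c *g (b + y) >>.
Proof. by rewrite /translate liftU scaler_freegU mulr1. Qed.

Lemma translate0 g : translate 0 g = g.
Proof. by apply/eqP/freeg_eqP => x; rewrite coeff_translate subr0. Qed.

Lemma translateD b b' g : translate (b + b') g = translate b (translate b' g).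
Proof. by apply/eqP/freeg_eqP => x; rewrite !coeff_translate opprD addrA. Qed.

Lemma translateZ b c g : translate b (c *: g) = c *: translate b g.
Proof. by apply/eqP/freeg_eqP => x; rewrite coeffZ !coeff_translate coeffZ. Qed.

Lemma gr_mulE f g : gr_mul f g = fglift (translate^~ g) f.
Proof.
rewrite fgliftE; apply: eq_bigr => b _; rewrite /translate fgliftE scaler_sumr.
by apply: eq_bigr => y _; rewrite /gr_mono !scaler_freegU mulr1.
Qed.

Lemma gr_mulBl f f' g : gr_mul (f - f') g = gr_mul f g - gr_mul f' g.
Proof. by rewrite !gr_mulE raddfB. Qed.

Lemma gr_mul_suml I (r : seq I) (F : I -> G) g :
  gr_mul (\sum_(i <- r) F i) g = \sum_(i <- r) gr_mul (F i) g.
Proof. by rewrite gr_mulE raddf_sum; apply: eq_bigr => i _; rewrite gr_mulE. Qed.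

Lemma gr_mulUl c b g : gr_mul << c *g b >> g = c *: translate b g.
Proof. by rewrite gr_mulE liftU. Qed.

Lemma gr_mulZr c f g : gr_mul f (c *: g) = c *: gr_mul f g.
Proof.
rewrite !gr_mulE !fgliftE scaler_sumr; apply: eq_bigr => b _.
by rewrite translateZ !scalerA mulrC.
Qed.

Lemma gr_mulr1 f : gr_mul f (gr_one R A) = f.
Proof.
rewrite gr_mulE fgliftE -[RHS]freeg_sumE; apply: eq_bigr => b _.
by rewrite translateU addr0 scaler_freegU mulr1.
Qed.

Lemma gr_mulr0 f : gr_mul f 0 = 0.
Proof. by rewrite gr_mulE fgliftE big1 // => b _; rewrite raddf0 scaler0. Qed.

Lemma augmentationE f : augmentation f = fglift (fun=> 1 : R^o) f.
Proof. by rewrite fgliftE; apply: eq_bigr => y _; rewrite [_ *: _]mulr1. Qed.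

Lemma augmentation_is_zmod_morphism : zmod_morphism (@augmentation R A).
Proof. by move=> f g; rewrite !augmentationE raddfB. Qed.

HB.instance Definition _ :=
  GRing.isZmodMorphism.Build G R (@augmentation R A) augmentation_is_zmod_morphism.

Lemma augmentationU c y : augmentation << c *g y >> = c.
Proof. by rewrite augmentationE liftU [_ *: _]mulr1. Qed.

Lemma gr_prod_cons f s : gr_prod (f :: s) = gr_mul f (gr_prod s).
Proof. by []. Qed.

Lemma aug_pow_zeroS n : aug_pow_zero R A n -> aug_pow_zero R A n.+1.
Proof.
move=> In s; case/tupleP: s => f t /andP[_ It].
by rewrite [tval _]/= gr_prod_cons In // gr_mulr0.
Qed.

Definition aug_gen b : G := << 0 >> - << b >>.

Local Notation aug_prod s := (gr_prod (map aug_gen s)).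

Lemma augmentation_aug_gen b : augmentation (aug_gen b) = 0.
Proof. by rewrite raddfB /= !augmentationU subrr. Qed.

Lemma coeff_mul_aug_gen x b g :
  coeff x (gr_mul (aug_gen b) g) = coeff x g - coeff (x - b) g.
Proof. by rewrite gr_mulBl !gr_mulUl coeffB !scale1r !coeff_translate subr0. Qed.

Lemma gr_prod_aug_gen_eq0 n (s : seq A) :
  aug_pow_zero R A n -> size s = n -> aug_prod s = 0.
Proof.
move=> In size_s.
have size_ms : size (map aug_gen s) == n by rewrite size_map size_s.
apply: (In (Tuple size_ms)); rewrite all_map; apply/allP => b _ /=.
by rewrite augmentation_aug_gen.
Qed.

Lemma coeff_gr_prod_nil x : coeff x (gr_prod ([::] : seq G)) = (0 == x)%:R.
Proof. by rewrite /= /gr_one /gr_mono coeffU mul1r. Qed.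

Lemma coeff_pow_aug_gen_neq0 a n x :
  coeff x (aug_prod (nseq n a)) != 0 -> exists2 j, (j <= n)%N & x = a *+ j.
Proof.
elim: n x => [|n IHn] x.
  rewrite coeff_gr_prod_nil; have [-> _|_] := eqVneq x 0; first by exists 0%N.
  by rewrite eqxx.
rewrite [map _ _]/= gr_prod_cons coeff_mul_aug_gen.
set P := gr_prod _; have [P_x0 | /IHn[j le_jn ->] _] := eqVneq (coeff x P) 0.
  rewrite P_x0 sub0r oppr_eq0 => /IHn[j le_jn /eqP]; rewrite subr_eq => /eqP->.
  by exists j.+1; rewrite // mulrSr.
by exists j; rewrite // leqW.
Qed.

Lemma coeff_pow_aug_gen a n : (forall j, (0 < j <= n)%N -> a *+ j != 0) ->
  coeff (a *+ n) (aug_prod (nseq n a)) = (-1) ^+ n.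
Proof.
elim: n => [|n IHn] a_tors; first by rewrite coeff_gr_prod_nil eqxx.
rewrite [map _ _]/= gr_prod_cons coeff_mul_aug_gen mulrSr addrK IHn; last first.
  by move=> j /andP[j_gt0 le_jn]; rewrite a_tors // j_gt0 ltnW.
suff -> : coeff (a *+ n + a) (aug_prod (nseq n a)) = 0.
  by rewrite sub0r exprS mulN1r.
apply/eqP; apply: contraT => /coeff_pow_aug_gen_neq0[j le_jn] /eqP.
rewrite -mulrSr -subr_eq0 -mulrnBr ?(leqW le_jn) // (negPf (a_tors _ _)) //.
by rewrite subn_gt0 ltnS le_jn leq_subr.
Qed.

Lemma not_aug_pow_zero a n : (forall j, (0 < j <= n)%N -> a *+ j != 0) ->
  ~ aug_pow_zero R A n.
Proof.
move=> a_tors In; have := coeff_pow_aug_gen a_tors.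
rewrite (gr_prod_aug_gen_eq0 In (size_nseq n a)) coeff0 => /eqP.
by rewrite eq_sym signr_eq0.
Qed.

Lemma aug_not_nilpotent_of_infinite_order a : infinite_order a -> aug_not_nilpotent R A.
Proof. by move=> a_inf n; apply: (not_aug_pow_zero (a := a)) => j /andP[/a_inf]. Qed.

Section CyclicNorm.
Variables (a : A) (m : nat).
Hypothesis am0 : a *+ m = 0.

Definition norm_elt : G := \sum_(j < m) << a *+ j >>.

Definition aug_norm : G := \sum_(j < m) aug_gen (a *+ j).

Lemma aug_normE : aug_norm = << m%:R *g 0 >> - norm_elt.
Proof.
by rewrite /aug_norm /norm_elt sumrB sumr_const card_ord freegU_muln.
Qed.

Lemma augmentation_aug_norm : augmentation aug_norm = 0.
Proof.
rewrite /aug_norm (raddf_sum (@augmentation R A)) big1 // => j _.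
exact: augmentation_aug_gen.
Qed.

Lemma translate_norm_elt : translate a norm_elt = norm_elt.
Proof.
rewrite /norm_elt (raddf_sum (translate a)).
under eq_bigr do rewrite /= translateU -mulrS.
case: m am0 => [|k] ak; first by rewrite !big_ord0.
by rewrite big_ord_recr big_ord_recl /= ak addrC.
Qed.

Lemma translate_mul_norm_elt k : translate (a *+ k) norm_elt = norm_elt.
Proof.
elim: k => [|k IHk]; first by rewrite translate0.
by rewrite mulrS translateD IHk translate_norm_elt.
Qed.

Lemma aug_norm_sqr : gr_mul aug_norm aug_norm = m%:R *: aug_norm.
Proof.
rewrite {1}aug_normE gr_mulBl gr_mulUl translate0 /norm_elt gr_mul_suml.
suff -> : \sum_(j < m) gr_mul << a *+ j >> aug_norm = 0 by rewrite subr0.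
under eq_bigr do rewrite gr_mulUl scale1r aug_normE (raddfB (translate _)) /=
  translateU addr0 translate_mul_norm_elt.
rewrite sumrB sumr_const card_ord; under eq_bigr do rewrite -freegU_muln.
by rewrite sumrMnl subrr.
Qed.

Lemma gr_prod_nseq_aug_norm n :
  gr_prod (nseq n.+1 aug_norm) = m%:R ^+ n *: aug_norm.
Proof.
elim: n => [|n IHn]; first by rewrite scale1r [gr_prod _]/= gr_mulr1.
by rewrite [nseq _ _]/= gr_prod_cons IHn gr_mulZr aug_norm_sqr scalerA -exprSr.
Qed.

(* Read at [a] rather than at [0], where the coefficient [m - 1] may vanish in [R]. *)
Lemma coeff_aug_norm : has_order a m -> (1 < m)%N -> coeff a aug_norm = -1.
Proof.
case=> _ _ a_ord m_gt1; have a_neq0 : a != 0 by rewrite -[a]mulr1n a_ord ?m_gt1.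
rewrite aug_normE coeffB coeffU eq_sym (negPf a_neq0) mulr0 sub0r; congr (- _).
rewrite /norm_elt raddf_sum (bigD1 (Ordinal m_gt1)) //= coeffU mul1r mulr1n eqxx.
rewrite big1 ?addr0 // => -[[|j] lt_jm] /= j_neq1; rewrite coeffU mul1r.
  by rewrite mulr0n eq_sym (negPf a_neq0).
rewrite mulrSr -subr_eq0 addrK (negPf (a_ord _ _)) // (ltn_trans _ lt_jm) // andbT.
by rewrite lt0n; apply: contraNneq j_neq1 => j0; apply/eqP/val_inj; rewrite /= j0.
Qed.

End CyclicNorm.

Lemma aug_not_nilpotent_of_order a m : has_order a m -> (1 < m)%N ->
  (forall n, (m ^ n)%:R != 0 :> R) -> aug_not_nilpotent R A.
Proof.
move=> a_ord m_gt1 mX_neq0 n /aug_pow_zeroS In; have [_ am0 _] := a_ord.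
have : gr_prod (nseq n.+1 (aug_norm a m)) = 0.
  apply: (In (nseq_tuple n.+1 (aug_norm a m))).
  by rewrite all_nseq augmentation_aug_norm eqxx orbT.
rewrite gr_prod_nseq_aug_norm // => /(congr1 (coeff a)).
rewrite coeffZ coeff_aug_norm // coeff0 mulrN1 => /eqP.
by rewrite oppr_eq0 -natrX; apply/negP.
Qed.

Lemma aug_not_nilpotent_char0 a : (forall k, (0 < k)%N -> k%:R != 0 :> R) ->
  a != 0 -> aug_not_nilpotent R A.
Proof.
move=> R_char0 a_neq0 n In.
(* Torsion of [a] is only tested up to [n], which keeps the case split decidable. *)
have [/existsP[k /andP[k_gt0 ak0]] | no_tors] :=
  boolP [exists k : 'I_n.+1, (0 < k)%N && (a *+ k == 0)].
  have a_tors : exists k, (0 < k)%N && (a *+ k == 0) by exists k; rewrite k_gt0.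
  case: (ex_minnP a_tors) => m /andP[m_gt0 /eqP am0] m_min.
  have m_gt1 : (1 < m)%N.
    rewrite ltn_neqAle eq_sym m_gt0 andbT.
    by apply: contra_neq a_neq0 => m1; rewrite -am0 m1.
  have a_ord : has_order a m.
    split=> // j /andP[j_gt0 lt_jm]; apply: contraTneq lt_jm => aj0.
    by rewrite -leqNgt m_min // j_gt0 aj0 eqxx.
  have mX_neq0 i : (m ^ i)%:R != 0 :> R by rewrite R_char0 // expn_gt0 m_gt0.
  exact: (aug_not_nilpotent_of_order a_ord m_gt1 mX_neq0 In).
apply: (not_aug_pow_zero (a := a)) In => j /andP[j_gt0 le_jn].
apply: contraNneq no_tors => aj0; apply/existsP.
by exists (Ordinal (le_jn : (j < n.+1)%N)); rewrite j_gt0 aj0 eqxx.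
Qed.

End GroupRing.

Section FiniteGroupRing.
Variables (R : comNzRingType) (A : finZmodType).
Local Notation aug_prod s := (gr_prod (map (@aug_gen R A) s)).

Fixpoint strict_gen_chain (s : seq A) : bool :=
  if s is b :: s' then (b \notin <<[set y in s']>>%g) && strict_gen_chain s' else true.

Lemma mem_gen_sum (s : seq A) : \sum_(x <- s) x \in <<[set y in s]>>%g.
Proof.
rewrite big_seq; apply: (big_ind (fun x => x \in <<[set y in s]>>%g)).
- exact: group1.
- by move=> x y; apply: groupM.
- by move=> x x_s; apply: mem_gen; rewrite inE.
Qed.

Lemma coeff_prod_aug_gen_neq0 s x : coeff x (aug_prod s) != 0 -> x \in <<[set y in s]>>%g.
Proof.
elim: s x => [|b s IHs] x.
  rewrite coeff_gr_prod_nil; have [-> _|_] := eqVneq x 0; first exact: group1.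
  by rewrite eqxx.
have sub_s : (<<[set y in s]>> \subset <<[set y in b :: s]>>)%g.
  by apply: genS; apply/subsetP => y; rewrite !inE => ->; rewrite orbT.
rewrite [map _ _]/= gr_prod_cons coeff_mul_aug_gen.
have [P_x0 | /IHs/(subsetP sub_s)//] := eqVneq (coeff x (aug_prod s)) 0.
rewrite P_x0 sub0r oppr_eq0 => /IHs/(subsetP sub_s) xb_in.
rewrite -(subrK b x); apply: groupM => //.
by apply: mem_gen; rewrite !inE eqxx.
Qed.

Lemma coeff_prod_aug_gen s : strict_gen_chain s ->
  coeff (\sum_(x <- s) x) (aug_prod s) = (-1) ^+ size s.
Proof.
elim: s => [|b s IHs] /=; first by rewrite big_nil coeff_gr_prod_nil eqxx.
case/andP=> b_notin chain_s.
rewrite big_cons coeff_mul_aug_gen [b + _]addrC addrK IHs //.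
suff -> : coeff (\sum_(x <- s) x + b) (aug_prod s) = 0 by rewrite sub0r exprS mulN1r.
apply/eqP; apply: contraNT b_notin => /coeff_prod_aug_gen_neq0 sum_b_in.
rewrite -(addKr (\sum_(x <- s) x) b).
by apply: groupM => //; apply/groupVr/mem_gen_sum.
Qed.

Lemma abelian_finZmod : abelian [set: A].
Proof. by apply/centsP=> x _ y _; apply: addrC. Qed.

Lemma exists_strict_gen_chain n : (n < ('r([set: A]))%g)%N ->
  exists2 s, strict_gen_chain s & size s = n.
Proof.
elim: n => [|n IHn] lt_nr; first by exists [::].
have [s chain_s size_s] := IHn (ltnW lt_nr).
have : ~~ ([set: A] \subset <<[set y in s]>>%g).
  apply/negP => sub_sA.
  have gen_s : <<[set y in s]>>%g = [set: A] by apply/eqP; rewrite eqEsubset subsetT.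
  have := grank_min [set y in s]; rewrite gen_s grank_abelian ?abelian_finZmod // cardsE.
  move/leq_trans/(_ (card_size s)); rewrite size_s => le_rn.
  by rewrite ltnNge (leqW le_rn) in lt_nr.
case/subsetPn => b _ b_notin; exists (b :: s); last by rewrite /= size_s.
by rewrite /= b_notin chain_s.
Qed.

Lemma ab_rank_le_rank : (ab_rank A <= ('r([set: A]))%g)%N.
Proof.
rewrite /ab_rank; case: ex_minnP => k _ k_min.
have [b defA typeA] := abelian_structure abelian_finZmod.
rewrite -(size_abelian_type abelian_finZmod) -typeA size_map; apply: k_min.
by apply/existsP; exists (in_tuple b); apply/eqP.
Qed.

Lemma nu_ge_exponent_rank : nu_ge R A (maxn (ab_exponent A) (ab_rank A)).
Proof.
move=> n In; rewrite geq_max; apply/andP; split; rewrite leqNgt; apply/negP => lt_n.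
  have [x _ ox] := exponent_witness (abelian_nil abelian_finZmod).
  apply: (not_aug_pow_zero (a := x)) In => j /andP[j_gt0 le_jn].
  apply: contraTneq lt_n => xj0; rewrite -leqNgt /ab_exponent ox (leq_trans _ le_jn) //.
  by rewrite dvdn_leq // order_dvdn; apply/eqP.
have [s chain_s size_s] := exists_strict_gen_chain (leq_trans lt_n ab_rank_le_rank).
have := coeff_prod_aug_gen chain_s; rewrite (gr_prod_aug_gen_eq0 In size_s) coeff0.
by move/eqP; rewrite eq_sym signr_eq0.
Qed.

End FiniteGroupRing.

Lemma Zp_natX_neq0 N m p n : (1 < N)%N -> prime p -> (p %| N)%N -> ~~ (p %| m)%N ->
  (m ^ n)%:R != 0 :> 'Z_N.
Proof.
move=> N_gt1 p_prime pN pNm; apply/eqP => mn0.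
have : (N %| m ^ n)%N by rewrite /dvdn -(val_Zp_nat N_gt1) mn0.
by move/(dvdn_trans pN); rewrite Euclid_dvdX // (negPf pNm).
Qed.

Theorem lemma3 :
  (* (a) *)
  (forall (R : comNzRingType) (A : zmodType),
     (exists a : A, a != 0) ->
     (exists a : A, infinite_order a) ->
     aug_not_nilpotent R A) /\
  (* (b) *)
  (forall A : zmodType,
     (exists a : A, a != 0) ->
     aug_not_nilpotent int A) /\
  (* (c) *)
  (forall (A : zmodType) (m N : nat),
     (exists a : A, a != 0) ->
     (2 <= m)%N -> (2 <= N)%N ->
     (exists p : nat, [/\ prime p, (p %| N)%N & ~~ (p %| m)%N]) ->
     (exists a : A, has_order a m) ->
     aug_not_nilpotent 'Z_N A) /\
  (* (d) *)
  (forall (R : comNzRingType) (A : finZmodType),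
     (exists a : A, a != 0) ->
     nu_ge R A (maxn (ab_exponent A) (ab_rank A))).
Proof.
split; first by move=> R A _ [a a_inf]; apply: aug_not_nilpotent_of_infinite_order a_inf.
split.
  move=> A [a a_neq0]; apply: (aug_not_nilpotent_char0 (a := a)) a_neq0 => k k_gt0.
  by rewrite pnatr_eq0 -lt0n.
split; last by move=> R A _; apply: nu_ge_exponent_rank.
move=> A m N _ m_gt1 N_gt1 [p [p_prime pN pNm]] [a a_ord].
apply: (aug_not_nilpotent_of_order a_ord m_gt1) => n.
exact: Zp_natX_neq0 N_gt1 p_prime pN pNm.
Qed.
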